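(* Let $n\ge 2$ be an integer and $t>1$ a real number, and let $O^t_n$ be the set of $n$ line segments in the plane defined below. Then every imprecise $t$-spanner for $O^t_n$ is the complete graph: for any two distinct segments of $O^t_n$ there is an edge between them. In particular, every imprecise $t$-spanner for $O^t_n$ has $\binom{n}{2}=\Omega(n^2)$ edges.
   Context: Construction of $O^t_n$: let $\theta=2\pi/n$ and for $0\le i<n$ let $\ell_i$ be the ray from the origin obtained by rotating the positive $x$-axis by angle $i\theta$. Let $D_1,D_2$ be the disks centered at the origin with radii $0.4$ and $(t+1)/2$. Let $p_i$ and $q_i$ be the intersection points of $\ell_i$ with the boundaries of $D_1$ and $D_2$ respectively. Then $O^t_n=\{\overline{p_iq_i} : 0\le i<n\}$, a set of pairwise disjoint segments. An imprecise point set is a set $R=\{R_1,\dots,R_n\}$ of regions in $\mathbb{R}^d$; a precise instance of $R$ is a set $S=\{x_1,\dots,x_n\}$ with $x_i\in R_i$ for all $i$. An imprecise graph $G=(R,E)$ has as edges unordered pairs of regions; for a precise instance $S$, $G_S=(S,E_S)$ with $E_S=\{\{x_i,x_j\}:\{R_i,R_j\}\in E\}$, edges weighted by Euclidean length. A geometric graph $H$ on a point set is a $t$-spanner if for all distinct vertices $u,v$ the shortest-path distance $d_H(u,v)$ satisfies $d_H(u,v)\le t\,|uv|$. $G$ is an imprecise $t$-spanner for $R$ if $G_S$ is a $t$-spanner for every precise instance $S$ of $R$. *)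

From Stdlib Require Import Reals Lra List.
Open Scope R_scope.

Definition point : Type := (R * R)%type.

Definition dist (p q : point) : R :=
  sqrt ((fst p - fst q) ^ 2 + (snd p - snd q) ^ 2).

(* The set O^t_n : region i (0 <= i < n) is the segment p_i q_i on the ray
   l_i of angle i*theta, theta = 2 pi / n, between radius 0.4 and (t+1)/2. *)
Definition theta (n : nat) : R := 2 * PI / INR n.

Definition ray_point (n i : nat) (r : R) : point :=
  (r * cos (INR i * theta n), r * sin (INR i * theta n)).

Definition p_pt (n i : nat) : point := ray_point n i (4 / 10).
Definition q_pt (t : R) (n i : nat) : point := ray_point n i ((t + 1) / 2).

Definition in_O (t : R) (n i : nat) (x : point) : Prop :=
  exists lam : R, 0 <= lam <= 1 /\
    x = (lam * fst (p_pt n i) + (1 - lam) * fst (q_pt t n i),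
         lam * snd (p_pt n i) + (1 - lam) * snd (q_pt t n i)).

(* An imprecise graph on regions indexed by 0..n-1: E is an edge relation on
   indices; the unordered edge {i,j} is present iff E i j or E j i. *)
Definition adj (E : nat -> nat -> Prop) (a b : nat) : Prop := E a b \/ E b a.

(* A walk a = k_0, k_1, ..., k_m = b in the graph, with the list giving the
   intermediate vertices; all intermediate vertices are regions (< n). *)
Fixpoint walk (n : nat) (E : nat -> nat -> Prop) (a : nat) (l : list nat) (b : nat)
  : Prop :=
  match l with
  | nil => adj E a b
  | c :: l' => (c < n)%nat /\ adj E a c /\ walk n E c l' b
  end.

Fixpoint walk_len (x : nat -> point) (a : nat) (l : list nat) (b : nat) : R :=
  match l with
  | nil => dist (x a) (x b)
  | c :: l' => dist (x a) (x c) + walk_len x c l' b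
  end.

(* d_{G_S}(x_i, x_j) <= t |x_i x_j| : the shortest-path distance is the
   minimum of the lengths of walks, so this says some walk is short enough. *)
Definition spanner_pair (t : R) (n : nat) (E : nat -> nat -> Prop)
  (x : nat -> point) (i j : nat) : Prop :=
  exists l : list nat, walk n E i l j /\ walk_len x i l j <= t * dist (x i) (x j).

Definition is_t_spanner (t : R) (n : nat) (E : nat -> nat -> Prop)
  (x : nat -> point) : Prop :=
  forall i j : nat, (i < n)%nat -> (j < n)%nat -> i <> j -> spanner_pair t n E x i j.

Definition precise_instance (t : R) (n : nat) (x : nat -> point) : Prop :=
  forall i : nat, (i < n)%nat -> in_O t n i (x i).

Definition imprecise_t_spanner (t : R) (n : nat) (E : nat -> nat -> Prop) : Prop :=
  forall x : nat -> point, precise_instance t n x -> is_t_spanner t n E x.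

(* Put x_i = p_i and x_j = p_j on the inner circle and every other x_k = q_k
   on the outer circle.  A walk from p_i to p_j that is not the single edge
   {i, j} passes through some q_k, so by the triangle inequality through the
   origin it has length at least 2 ((t+1)/2 - 0.4) = t + 0.2, whereas
   t |p_i p_j| <= 0.8 t. *)
From Stdlib Require Import Reals Lra List.
From Stdlib Require Rgeom.
Open Scope R_scope.

Definition origin : point := (0, 0).

Lemma dist_euclidean (p q : point) :
  dist p q = Rgeom.dist_euc (fst p) (snd p) (fst q) (snd q).
Proof. unfold dist, Rgeom.dist_euc, Rsqr. f_equal. ring. Qed.

Lemma dist_triangle (a b c : point) : dist a b <= dist a c + dist c b.
Proof. rewrite !dist_euclidean. apply Rgeom.triangle. Qed.

Lemma dist_sym (a b : point) : dist a b = dist b a.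
Proof. rewrite !dist_euclidean. apply Rgeom.distance_symm. Qed.

Lemma dist_origin_ray_point (n k : nat) (r : R) :
  0 <= r -> dist origin (ray_point n k r) = r.
Proof.
  intros Hr. unfold dist, ray_point, origin; simpl.
  set (a := INR k * theta n).
  replace ((0 - r * cos a) * ((0 - r * cos a) * 1) + (0 - r * sin a) * ((0 - r * sin a) * 1))
    with (r * r * (Rsqr (sin a) + Rsqr (cos a))) by (unfold Rsqr; ring).
  rewrite sin2_cos2, Rmult_1_r. now apply sqrt_square.
Qed.

Lemma dist_le_radius_sum (a b : point) (r s : R) :
  dist origin a = r -> dist origin b = s -> dist a b <= r + s.
Proof.
  intros Ha Hb. pose proof (dist_triangle a b origin).
  rewrite (dist_sym a origin) in H. lra.
Qed.

Lemma dist_ge_radius_diff (a b : point) (r s : R) :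
  dist origin a = r -> dist origin b = s -> s - r <= dist a b.
Proof. intros Ha Hb. pose proof (dist_triangle origin b a). lra. Qed.

Lemma walk_len_ge_dist (x : nat -> point) (l : list nat) (a b : nat) :
  dist (x a) (x b) <= walk_len x a l b.
Proof.
  revert a. induction l as [|c l IH]; intros a; simpl; [lra|].
  pose proof (IH c). pose proof (dist_triangle (x a) (x b) (x c)). lra.
Qed.

Lemma walk_len_ge_detour (x : nat -> point) (l : list nat) (a b c : nat) :
  In c l -> dist (x a) (x c) + dist (x c) (x b) <= walk_len x a l b.
Proof.
  revert a. induction l as [|d l IH]; intros a Hin; simpl in *; [contradiction|].
  destruct Hin as [-> | Hin].
  - pose proof (walk_len_ge_dist x l c b). lra.
  - pose proof (IH d Hin). pose proof (dist_triangle (x a) (x c) (x d)). lra.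
Qed.

Lemma walk_adj_or_detour (n : nat) (E : nat -> nat -> Prop) (l : list nat) (a b : nat) :
  walk n E a l b -> adj E a b \/ exists c, In c l /\ c <> a /\ c <> b.
Proof.
  revert a. induction l as [|c l IH]; intros a Hw; simpl in *; [now left|].
  destruct Hw as [_ [Hac Hw]].
  destruct (Nat.eq_dec c b) as [<- | Hcb]; [now left|].
  destruct (Nat.eq_dec c a) as [-> | Hca].
  - destruct (IH a Hw) as [Hab | [d [Hd Hda]]]; [now left|].
    right. exists d. tauto.
  - right. exists c. tauto.
Qed.

Lemma p_pt_in_O (t : R) (n k : nat) : in_O t n k (p_pt n k).
Proof.
  exists 1. split; [lra|].
  destruct (p_pt n k) as [u v]; simpl. f_equal; ring.
Qed.

Lemma q_pt_in_O (t : R) (n k : nat) : in_O t n k (q_pt t n k).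
Proof.
  exists 0. split; [lra|].
  destruct (q_pt t n k) as [u v]; simpl. f_equal; ring.
Qed.

Definition inner_pair_instance (t : R) (n i j : nat) (k : nat) : point :=
  if (Nat.eqb k i || Nat.eqb k j)%bool then p_pt n k else q_pt t n k.

Lemma inner_pair_instance_precise (t : R) (n i j : nat) :
  precise_instance t n (inner_pair_instance t n i j).
Proof.
  intros k _. unfold inner_pair_instance.
  destruct (Nat.eqb k i || Nat.eqb k j)%bool; [apply p_pt_in_O | apply q_pt_in_O].
Qed.

Lemma inner_pair_instance_l (t : R) (n i j : nat) :
  inner_pair_instance t n i j i = p_pt n i.
Proof. unfold inner_pair_instance. now rewrite Nat.eqb_refl. Qed.

Lemma inner_pair_instance_r (t : R) (n i j : nat) :
  inner_pair_instance t n i j j = p_pt n j.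
Proof. unfold inner_pair_instance. now rewrite Nat.eqb_refl, Bool.orb_true_r. Qed.

Lemma inner_pair_instance_other (t : R) (n i j k : nat) :
  k <> i -> k <> j -> inner_pair_instance t n i j k = q_pt t n k.
Proof.
  intros Hki Hkj. unfold inner_pair_instance.
  apply Nat.eqb_neq in Hki, Hkj. now rewrite Hki, Hkj.
Qed.

Lemma detour_through_outer_too_long (t : R) (n i j k : nat) : 0 <= t ->
  t * dist (p_pt n i) (p_pt n j) < dist (p_pt n i) (q_pt t n k) + dist (q_pt t n k) (p_pt n j).
Proof.
  intros Ht.
  assert (Hp : forall m, dist origin (p_pt n m) = 4 / 10)
    by (intro m; apply dist_origin_ray_point; lra).
  assert (Hq : dist origin (q_pt t n k) = (t + 1) / 2)
    by (apply dist_origin_ray_point; lra).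
  pose proof (dist_le_radius_sum _ _ _ _ (Hp i) (Hp j)) as Hij.
  pose proof (dist_ge_radius_diff _ _ _ _ (Hp i) Hq) as Hik.
  pose proof (dist_ge_radius_diff _ _ _ _ (Hp j) Hq) as Hjk.
  rewrite dist_sym in Hjk.
  pose proof (Rmult_le_compat_l t _ _ Ht Hij). lra.
Qed.

Theorem lemma1 (n : nat) (t : R) (E : nat -> nat -> Prop) :
  (2 <= n)%nat -> 1 < t ->
  imprecise_t_spanner t n E ->
  forall i j : nat, (i < n)%nat -> (j < n)%nat -> i <> j -> adj E i j.
Proof.
  intros _ Ht Hsp i j Hi Hj Hij.
  set (x := inner_pair_instance t n i j).
  destruct (Hsp x (inner_pair_instance_precise t n i j) i j Hi Hj Hij) as [l [Hw Hlen]].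
  destruct (walk_adj_or_detour n E l i j Hw) as [Hadj | [k [Hk [Hki Hkj]]]]; [exact Hadj|].
  exfalso.
  pose proof (walk_len_ge_detour x l i j k Hk) as Hdetour.
  unfold x in *.
  rewrite inner_pair_instance_l, inner_pair_instance_r,
    (inner_pair_instance_other t n i j k Hki Hkj) in *.
  pose proof (detour_through_outer_too_long t n i j k ltac:(lra)). lra.
Qed.
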